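(* Let $\{\mu_t\}$ be a free convolution semigroup and let $\{V_n(x,t)\}_{n\ge1}$ be a family of fluctuation polynomials for $\{\mu_t\}$, i.e. for each $n\ge1$, $\partial_xV_n(x,t)$ is a martingale polynomial for $\{\mu_t\}$ of degree $n-1$. Then for each $t\in\mathbb R_+$, $\{1\}\cup\{V_n(\cdot,t)\}_{n\ge1}$ is a basis of $\mathbb C[x]$. Let $\{V_n^\ast(t)\}_{n\ge1}\subset\mathcal M_0$ be the dual family, determined by $\langle V_n^\ast(t),1\rangle=0$ and $\langle V_n^\ast(t),V_k(\cdot,t)\rangle=\delta_{nk}$. Then for all $n\ge1$ and $s,t\ge0$, $D_{\mu_s}C_t(V_n^\ast(s))=V_n^\ast(t+s)$.
   Context: $\mathcal M$ is the space of linear functionals on $\mathbb C[x]$ with the weak-$*$ topology (convergence of every moment), $\mathcal M_1=\{\nu:\langle\nu,1\rangle=1\}$, $\mathcal M_0=\{\nu:\langle\nu,1\rangle=0\}$. For unital $\nu$: $G_\nu(z)=\sum\langle\nu,x^n\rangle z^{-(n+1)}$, $K_\nu$ its compositional inverse, $R_\nu=K_\nu-\frac1z$; $\boxplus$ on $\mathcal M_1$ is defined by $R_{\mu\boxplus\nu}=R_\mu+R_\nu$. $\mu$ is a freely infinitely divisible probability measure with all moments finite and $\{\mu_t\}$ the free convolution semigroup with $\mu_1=\mu$, $R_{\mu_t}=tR_\mu$. $C_t(\tau)=\mu_t\boxplus\tau$ and $D_\tau C_t(\nu)=\lim_{\varepsilon\to0}\frac1\varepsilon(C_t(\tau+\varepsilon\nu)-C_t(\tau))$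 (weak-$*$ limit) for $\tau\in\mathcal M_1$, $\nu\in\mathcal M_0$. Martingale polynomial: $p(x,t)$ polynomial in $x$ with $\mathcal K_{s,t}(p(\cdot,t))=p(\cdot,s)$ for $s<t$, where $\mathcal K_{s,t}$ is the linear operator on $\mathbb C[x]$ determined coefficientwise (as formal series in $z^{-1}$) by $\mathcal K_{s,t}(\mathrm{Res}_z)=\mathrm{Res}_{F_{s,t}(z)}$, $\mathrm{Res}_z(x)=\frac1{z-x}$, $F_{s,t}=K_{\mu_s}\circ G_{\mu_t}$. *)

From HB Require Import structures.
From mathcomp Require Import all_boot all_order all_algebra.
From mathcomp Require Import complex.
From mathcomp Require Import all_classical all_reals all_analysis.
Set Implicit Arguments. Unset Strict Implicit. Unset Printing Implicit Defensive.
Import Order.TTheory GRing.Theory Num.Theory.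
Local Open Scope ring_scope.
Local Open Scope complex_scope.

Section FormalSeries.
Variable K : comPzRingType.

Definition ps := nat -> K.
Definition ps_one : ps := fun n => (n == 0%N)%:R.
Definition ps_X : ps := fun n => (n == 1%N)%:R.
Definition ps_mul (a b : ps) : ps := fun n => \sum_(i < n.+1) a i * b (n - i)%N.
Definition ps_exp (a : ps) (k : nat) : ps := iter k (ps_mul a) ps_one.

(* strong recursion: value at n computed from the values at indices < n *)
Fixpoint srec_seq (f : nat -> (nat -> K) -> K) (n : nat) : seq K :=
  match n with
  | 0 => [:: f 0%N (fun _ => 0)]
  | n'.+1 => let s := srec_seq f n' in rcons s (f n (nth 0 s))
  end.
Definition srec (f : nat -> (nat -> K) -> K) : ps := fun n => nth 0 (srec_seq f n) n.

(* multiplicative inverse of a series whose constant coefficient is 1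
   (the coefficient a 0 is not read and is taken to be 1) *)
Definition ps_inv1 (a : ps) : ps :=
  srec (fun n b => if n is 0 then 1 else - \sum_(1 <= i < n.+1) a i * b (n - i)%N).
End FormalSeries.

Section FreeProb.
Variable R : realType.
Local Notation C := R[i].

(* M : linear functionals on C[x], represented by their moment sequences
   n |-> <nu, x^n> ; M_1 : nu 0 = 1 ; M_0 : nu 0 = 0 *)
Definition Mom := nat -> C.
Definition pairing (nu : Mom) (p : {poly C}) : C := \sum_(i < size p) p`_i * nu i.

(* With w = 1/z: G_nu(1/w) = w * M_nu(w), M_nu(w) = sum_n <nu,x^n> w^n.
   K_nu (G_nu z) = z with K_nu u = 1/u + R_nu(u), R_nu(u) = sum_{j>=0} k_{j+1} u^j,
   is, after multiplication by G_nu, the coefficientwise identity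
     M_nu(w) = 1 + sum_{j>=1} k_j (w M_nu(w))^j .                (R)
   [free_cum nu] is the coefficient sequence (k_j)_{j>=1} of R_nu solving (R)
   for unital nu (index 0 unused, set to 0), and [mom_of_cum k] is the unital
   moment sequence determined by (R) from a given R-transform. *)
Definition free_cum (nu : Mom) : nat -> C :=
  srec (fun n k => if n is 0 then 0
     else nu n - \sum_(1 <= j < n) k j * ps_exp (ps_mul (@ps_X C) nu) j n).

Definition mom_of_cum (k : nat -> C) : Mom :=
  srec (fun n m => if n is 0 then 1
     else \sum_(1 <= j < n.+1) k j * ps_exp (ps_mul (@ps_X C) m) j n).

Definition boxplus (mu nu : Mom) : Mom :=
  mom_of_cum (fun j => free_cum mu j + free_cum nu j).

Definition moments (P : probability R R) : Mom :=
  fun n => (fine (\int[P]_x (x ^+ n)%:E))%:C.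

Definition finite_moments (P : probability R R) : Prop :=
  forall n, P.-integrable setT (fun x : R => (x ^+ n)%:E).

(* 1/F_{s,t}(1/w) as a power series in w, where F_{s,t} = K_{mu_s} o G_{mu_t}:
   1/F = G_t / (1 + G_t R_s(G_t)) = g / D with g = w M_t(w),
   D = 1 + sum_{j>=1} k^s_j g^j. *)
Definition invF (ms mt : Mom) : nat -> C :=
  let g := ps_mul (@ps_X C) mt in
  let D := fun n => (n == 0%N)%:R
                    + \sum_(1 <= j < n.+1) free_cum ms j * ps_exp g j n in
  ps_mul g (ps_inv1 D).

(* K_{s,t}: Res_z(x) = 1/(z-x) = sum_n x^n w^{n+1}, and
   Res_{F(z)}(x) = 1/(F - x) = sum_k x^k (1/F)^{k+1};
   so K_{s,t}(x^n) = [w^{n+1}] Res_{F(z)}(x) = sum_{k<=n} ([w^{n+1}](1/F)^{k+1}) x^k,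
   extended linearly to C[x]. *)
Definition Kop_mono (ms mt : Mom) (n : nat) : {poly C} :=
  \sum_(k < n.+1) ps_exp (invF ms mt) k.+1 n.+1 *: 'X^k.
Definition Kop (ms mt : Mom) (p : {poly C}) : {poly C} :=
  \sum_(i < size p) p`_i *: Kop_mono ms mt i.

Definition free_conv_semigroup (mu : R -> probability R R) : Prop :=
  (forall t, 0 <= t -> finite_moments (mu t)) /\
  (forall t, 0 <= t -> forall j, (0 < j)%N ->
      free_cum (moments (mu t)) j = t%:C * free_cum (moments (mu 1)) j).

Definition martingale_poly (mu : R -> probability R R) (p : R -> {poly C}) : Prop :=
  forall s t, 0 <= s -> s < t ->
    Kop (moments (mu s)) (moments (mu t)) (p t) = p s.

Definition fluctuation_family (mu : R -> probability R R)
    (V : nat -> R -> {poly C}) : Prop :=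
  forall n, (0 < n)%N ->
    martingale_poly mu (fun t => (V n t)^`()) /\
    (forall t, 0 <= t -> size ((V n t)^`()) = n).

Definition is_basis_nat (b : nat -> {poly C}) : Prop :=
  (forall p : {poly C}, exists (N : nat) (c : nat -> C),
      p = \sum_(i < N) c i *: b i) /\
  (forall (N : nat) (c : nat -> C),
      \sum_(i < N) c i *: b i = 0 -> forall i, (i < N)%N -> c i = 0).

(* weak-* limit (moment-wise) of f eps as eps -> 0 in C, eps <> 0 *)
Definition wlim0 (f : C -> Mom) (l : Mom) : Prop :=
  forall n (e : R), 0 < e -> exists d : R, 0 < d /\
    forall eps : C, eps != 0 -> `|eps| < d%:C -> `|f eps n - l n| < e%:C.

Definition Ct (mu : R -> probability R R) (t : R) (tau : Mom) : Mom :=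
  boxplus (moments (mu t)) tau.
Definition is_DCt (mu : R -> probability R R) (t : R) (tau nu l : Mom) : Prop :=
  wlim0 (fun eps => fun n =>
           (Ct mu t (fun k => tau k + eps * nu k) n - Ct mu t tau n) / eps) l.
End FreeProb.

(* Perturb mu_s in a direction nu with <nu, 1> = 0: the moments of mu_t [+] (mu_s + eps nu)
   are polynomials in eps, and D_{mu_s} C_t(nu) is given by their coefficients of eps.
   In the variable w = 1/z, let M_s, M_{t+s} be the moment series and f = 1/F_{s,t+s}, so
   that (w M_s) o f = w M_{t+s}.  Differentiating the moment-cumulant relation
   M = 1 + R(w M) in eps, once at mu_s and once at mu_t [+] mu_s = mu_{t+s}, and
   transporting the first through f shows that D_{mu_s} C_t(nu) has moment series
   w (P o f)', where P(w) = sum_j nu_{j+1} w^{j+1} / (j+1) is the antiderivative of nu.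
   Paired with a polynomial W this is the pairing of P with K_{s,t+s}(W').  For
   W = V_k(., t+s) the martingale property turns K_{s,t+s}(W') into d/dx V_k(., s), and
   undoing the antiderivative leaves <nu, V_k(., s)>.  Hence D_{mu_s} C_t(V*_n(s)) and
   V*_n(t+s) agree on {1} u {V_k(., t+s)}, a basis because V_k(., t) has degree k. *)

From Pilot Require Import Defs.
From HB Require Import structures.
From mathcomp Require Import all_boot all_order all_algebra.
From mathcomp Require Import complex.
From mathcomp Require Import all_classical all_reals all_analysis.
From mathcomp Require Import zify ring lra.
Import Order.TTheory GRing.Theory Num.Theory.
Local Open Scope ring_scope.
Set Implicit Arguments. Unset Strict Implicit. Unset Printing Implicit Defensive.

Section StrongRecursion.
Variable K : comPzRingType.
Implicit Types f : nat -> (nat -> K) -> K.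

Definition causal f :=
  forall n b b', (forall i, (i < n)%N -> b i = b' i) -> f n b = f n b'.

Lemma size_srec_seq f n : size (srec_seq f n) = n.+1.
Proof. by elim: n => [|n IH] //=; rewrite size_rcons IH. Qed.

Lemma nth_srec_seq f n i : (i <= n)%N -> nth 0 (srec_seq f n) i = srec f i.
Proof.
elim: n => [|n IH] le_in; first by move: le_in; rewrite leqn0 => /eqP ->.
rewrite /= nth_rcons size_srec_seq.
case: ltngtP le_in => // [lt_in _|-> _]; first exact: IH.
by rewrite /srec /= nth_rcons size_srec_seq ltnn eqxx.
Qed.

Lemma srecE f n : srec f n = f n (fun i => if (i < n)%N then srec f i else 0).
Proof.
case: n => [|n]; first by rewrite /srec /=; congr (f 0%N); apply: boolp.funext.
rewrite /srec /= nth_rcons size_srec_seq ltnn eqxx; congr f.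
apply: boolp.funext => i; case: ltnP => lt_in; first by rewrite nth_srec_seq.
by rewrite nth_default // size_srec_seq.
Qed.

Lemma srec_fix f : causal f -> forall n, srec f n = f n (srec f).
Proof. by move=> fC n; rewrite srecE; apply: fC => i ->. Qed.

Lemma srec_unique f (a : nat -> K) :
  causal f -> (forall n, a n = f n a) -> forall n, a n = srec f n.
Proof.
move=> fC aE; elim/ltn_ind => n IH.
by rewrite aE srecE; apply: fC => i lt_in; rewrite lt_in IH.
Qed.
End StrongRecursion.

Lemma rmorph_srec (K K' : comPzRingType) (phi : {rmorphism K -> K'})
    (f : nat -> (nat -> K) -> K) (f' : nat -> (nat -> K') -> K') :
  (forall n b, phi (f n b) = f' n (phi \o b)) ->
  forall n, phi (srec f n) = srec f' n.
Proof.
move=> phiE; elim/ltn_ind => n IH.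
rewrite srecE [RHS]srecE phiE; congr f'; apply: boolp.funext => i /=.
by case: ifP => [/IH //|_]; rewrite rmorph0.
Qed.

Section Agree.
Variable K : comNzRingType.
Implicit Types p q r a b c f k Y : {poly K}.

Definition agree n p q := forall i, (i < n)%N -> p`_i = q`_i.

Lemma agree_sym n p q : agree n p q -> agree n q p.
Proof. by move=> pq i lt_in; rewrite pq. Qed.

Lemma agree_trans n p q r : agree n p q -> agree n q r -> agree n p r.
Proof. by move=> pq qr i lt_in; rewrite pq ?qr. Qed.

Lemma agree_le m n p q : (m <= n)%N -> agree n p q -> agree m p q.
Proof. by move=> le_mn pq i lt_im; apply/pq/(leq_trans lt_im). Qed.

Lemma agreeD n p q p' q' : agree n p q -> agree n p' q' -> agree n (p + p') (q + q').
Proof. by move=> pq pq' i lt_in; rewrite !coefD pq ?pq'. Qed.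

Lemma agreeB n p q p' q' : agree n p q -> agree n p' q' -> agree n (p - p') (q - q').
Proof. by move=> pq pq' i lt_in; rewrite !coefB pq ?pq'. Qed.

Lemma agreeM n p q p' q' : agree n p q -> agree n p' q' -> agree n (p * p') (q * q').
Proof.
move=> pq pq' i lt_in; rewrite !coefM; apply: eq_bigr => -[j /= le_ji] _.
by rewrite pq ?pq' // (leq_ltn_trans _ lt_in) // ?leq_subr // -ltnS.
Qed.

Lemma agreeX n p q m : agree n p q -> agree n (p ^+ m) (q ^+ m).
Proof. by move=> pq; elim: m => [|m IH] //; rewrite !exprS; apply: agreeM. Qed.

Lemma agree_deriv n p q : agree n.+1 p q -> agree n p^`() q^`().
Proof. by move=> pq i lt_in; rewrite !coef_deriv pq. Qed.

Lemma agree_mul_coef0 n f p q : f`_0 = 0 -> agree n p q -> agree n.+1 (f * p) (f * q).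
Proof.
move=> f0 pq i lt_in; rewrite !coefM; apply: eq_bigr => -[[|j] /= lt_ji] _.
  by rewrite f0 !mul0r.
by rewrite pq //; move: lt_ji lt_in; lia.
Qed.

Lemma agree_mulr_cancel n p q c : c`_0 = 1 -> agree n (p * c) (q * c) -> agree n p q.
Proof.
move=> c0; elim: n => [|n IH] pcqc //.
have pq := IH (agree_le (leqnSn n) pcqc).
move=> i; rewrite ltnS leq_eqVlt => /predU1P[->|]; last exact: pq.
move: (pcqc n (ltnSn n)); rewrite !coefM !big_ord_recr /= subnn c0 !mulr1.
rewrite (eq_bigr (fun j : 'I_n => q`_j * c`_(n - j))) => [/addrI //|j _].
by rewrite pq.
Qed.

Lemma mulX_drop1 r : r`_0 = 0 -> r = 'X * drop_poly 1 r.
Proof.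
move=> r0; apply/polyP => -[|k]; rewrite coefXM coef_drop_poly //=.
by rewrite addn1.
Qed.

Lemma coef_expr_lt r j i : r`_0 = 0 -> (i < j)%N -> (r ^+ j)`_i = 0.
Proof. by move=> /mulX_drop1 -> lt_ij; rewrite exprMn coefXnM lt_ij. Qed.

Lemma coef_comp_poly_le p r M i : (size p <= M)%N ->
  (p \Po r)`_i = \sum_(j < M) p`_j * (r ^+ j)`_i.
Proof.
move=> le_pM; rewrite coef_comp_poly -(subnKC le_pM) big_split_ord /=.
by rewrite [X in _ = _ + X]big1 ?addr0 // => j _; rewrite nth_default ?mul0r ?leq_addr.
Qed.

Lemma agree_compr n p a b : agree n a b -> agree n (p \Po a) (p \Po b).
Proof.
move=> ab i lt_in; rewrite !coef_comp_poly; apply: eq_bigr => j _.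
by rewrite (agreeX j ab).
Qed.

Lemma agree_compl n p q r : r`_0 = 0 -> agree n p q -> agree n (p \Po r) (q \Po r).
Proof.
move=> r0 pq i lt_in; set M := maxn (size p) (size q).
rewrite !(@coef_comp_poly_le _ _ M) ?leq_maxl ?leq_maxr //.
apply: eq_bigr => j _; case: (leqP j i) => [le_ji|lt_ij].
  by rewrite pq // (leq_ltn_trans le_ji).
by rewrite coef_expr_lt ?mulr0.
Qed.

Lemma agree_fixpoint_unique n f k Y Y' : f`_0 = 0 ->
  agree n Y (f * (1 + (k \Po Y))) -> agree n Y' (f * (1 + (k \Po Y'))) ->
  agree n Y Y'.
Proof.
move=> f0 YE Y'E; suff: forall m, (m <= n)%N -> agree m Y Y' by apply.
elim=> [|m IH] lt_mn //; have YY' := IH (ltnW lt_mn).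
apply: agree_trans (agree_le lt_mn YE) _.
apply: agree_trans (agree_sym (agree_le lt_mn Y'E)).
exact/agree_mul_coef0/agreeD/agree_compr.
Qed.
End Agree.

Section Truncation.
Variable K : comNzRingType.
Implicit Types a b m k : ps K.

Definition ps_poly n a : {poly K} := \poly_(i < n) a i.
Definition ps_mulX m : ps K := ps_mul (@ps_X K) m.

Lemma coef_ps_poly n a i : (ps_poly n a)`_i = if (i < n)%N then a i else 0.
Proof. exact: coef_poly. Qed.

Lemma size_ps_poly n a : (size (ps_poly n a) <= n)%N.
Proof. exact: size_poly. Qed.

Lemma eq_ps_poly n a b : a =1 b -> ps_poly n a = ps_poly n b.
Proof. by move=> ab; apply/polyP => i; rewrite !coef_ps_poly ab. Qed.

Lemma agree_ps_poly_mul n a b : agree n (ps_poly n (ps_mul a b)) (ps_poly n a * ps_poly n b).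
Proof.
move=> i lt_in; rewrite coef_ps_poly lt_in coefM; apply: eq_bigr => -[j /= le_ji] _.
by rewrite !coef_ps_poly !(leq_ltn_trans _ lt_in) // ?leq_subr // -ltnS.
Qed.

Lemma ps_mul_coef n a b i : (i < n)%N -> ps_mul a b i = (ps_poly n a * ps_poly n b)`_i.
Proof. by move=> lt_in; rewrite -agree_ps_poly_mul // coef_ps_poly lt_in. Qed.

Lemma ps_exp_coef n a j i : (i < n)%N -> ps_exp a j i = (ps_poly n a ^+ j)`_i.
Proof.
move=> lt_in; suff aj : agree n (ps_poly n (ps_exp a j)) (ps_poly n a ^+ j).
  by rewrite -aj // coef_ps_poly lt_in.
elim: j => [|j IH]; first by move=> i' lt_i'n; rewrite coef_ps_poly lt_i'n expr0 coef1.
rewrite exprS; apply: agree_trans (agree_ps_poly_mul a (ps_exp a j)) _.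
exact: agreeM.
Qed.

Lemma agree_ps_poly_mulX n m : agree n (ps_poly n (ps_mulX m)) ('X * ps_poly n m).
Proof.
move=> [|i] lt_in; rewrite coef_ps_poly lt_in coefXM /ps_mulX /ps_mul /ps_X /=.
  by rewrite big_ord1 mul0r.
rewrite !big_ord_recl big1 => [|j _]; last by rewrite mul0r.
by rewrite mul0r mul1r add0r addr0 subn1 coef_ps_poly ltnW.
Qed.

Lemma ps_exp_mulX_coef n m j i : (i < n)%N ->
  ps_exp (ps_mulX m) j i = (('X * ps_poly n m) ^+ j)`_i.
Proof. by move=> lt_in; rewrite (ps_exp_coef _ j lt_in) (agreeX j (agree_ps_poly_mulX m)). Qed.

Lemma ps_exp_mulX_diag m i : ps_exp (ps_mulX m) i i = m 0%N ^+ i.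
Proof.
rewrite (@ps_exp_mulX_coef i.+1) // exprMn coefXnM ltnn subnn.
by rewrite -[_`_0]/(coefp 0 _) rmorphXn /= coef_ps_poly.
Qed.

Lemma ps_exp_mulX_causal m m' n j : (forall i, (i < n)%N -> m i = m' i) ->
  ps_exp (ps_mulX m) j n = ps_exp (ps_mulX m') j n.
Proof.
move=> mm'; have mm'X : agree n.+1 ('X * ps_poly n.+1 m) ('X * ps_poly n.+1 m').
  by move=> [|i] lt_in; rewrite !coefXM // !coef_ps_poly /= (ltnW lt_in) mm'.
by rewrite !(@ps_exp_mulX_coef n.+1 _ _ n) // (agreeX j mm'X).
Qed.

Lemma coef_comp_ps_poly n k m i : k 0%N = 0 -> (i < n)%N ->
  (ps_poly n k \Po ('X * ps_poly n m))`_i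
   = \sum_(1 <= j < i.+1) k j * ps_exp (ps_mulX m) j i.
Proof.
move=> k0 lt_in; rewrite (@coef_comp_poly_le _ _ _ n) ?size_ps_poly //.
rewrite -(big_mkord xpredT (fun j => (ps_poly n k)`_j * (('X * ps_poly n m) ^+ j)`_i)).
rewrite (big_cat_nat (n := i.+1)) //= [X in _ + X]big1_seq ?addr0; last first.
  move=> j /andP[_]; rewrite mem_index_iota => /andP[lt_ij _].
  by rewrite coef_expr_lt ?mulr0 // coefXM.
rewrite big_ltn // coef_ps_poly (leq_ltn_trans (leq0n i) lt_in) k0 mul0r add0r.
apply: eq_big_nat => j /andP[_ le_ji].
by rewrite coef_ps_poly (leq_trans le_ji lt_in) (ps_exp_mulX_coef _ _ lt_in).
Qed.
End Truncation.

Section Cumulants.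
Variable K : comNzRingType.
Implicit Types a m k nu : ps K.

(* [free_cum], [mom_of_cum] and [invF] of the statement, over an arbitrary commutative
   ring: they are evaluated below on moments that are polynomials in a parameter. *)
Definition cumulants nu : ps K :=
  srec (fun n k => if n is 0 then 0
     else nu n - \sum_(1 <= j < n) k j * ps_exp (ps_mulX nu) j n).

Definition cum_moments k : ps K :=
  srec (fun n m => if n is 0 then 1
     else \sum_(1 <= j < n.+1) k j * ps_exp (ps_mulX m) j n).

Lemma cumulants0 nu : cumulants nu 0%N = 0.
Proof. by rewrite /cumulants srecE. Qed.

Lemma cum_moments0 k : cum_moments k 0%N = 1.
Proof. by rewrite /cum_moments srecE. Qed.

Lemma cumulantsE nu n : (0 < n)%N ->
  cumulants nu n = nu n - \sum_(1 <= j < n) cumulants nu j * ps_exp (ps_mulX nu) j n.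
Proof.
case: n => // n _; rewrite /cumulants srec_fix // => -[|n'] b b' bb' //.
by congr (_ - _); apply: eq_big_nat => j /andP[_ lt_jn]; rewrite bb'.
Qed.

Lemma cum_moments_causal k :
  causal (fun n m => if n is 0 then 1
     else \sum_(1 <= j < n.+1) k j * ps_exp (ps_mulX m) j n).
Proof.
move=> [|n] b b' bb' //; apply: eq_big_nat => j _.
by rewrite (ps_exp_mulX_causal _ bb').
Qed.

Lemma agree_mom_cumulants n nu : nu 0%N = 1 ->
  agree n (ps_poly n nu) (1 + (ps_poly n (cumulants nu) \Po ('X * ps_poly n nu))).
Proof.
move=> nu0 i lt_in; rewrite coefD coef1 coef_comp_ps_poly ?cumulants0 //.
rewrite coef_ps_poly lt_in; case: i lt_in => [|i] lt_in; first by rewrite big_geq ?addr0.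
rewrite add0r big_nat_recr // ps_exp_mulX_diag nu0 expr1n mulr1 [in RHS]cumulantsE //.
by rewrite /= addrC subrK.
Qed.

Lemma agree_cum_moments n k : k 0%N = 0 ->
  agree n (ps_poly n (cum_moments k))
          (1 + (ps_poly n k \Po ('X * ps_poly n (cum_moments k)))).
Proof.
move=> k0 i lt_in; rewrite coefD coef1 coef_comp_ps_poly // coef_ps_poly lt_in.
case: i lt_in => [|i] lt_in; first by rewrite big_geq ?addr0 ?cum_moments0.
by rewrite add0r /cum_moments srec_fix //; apply: cum_moments_causal.
Qed.

Lemma cum_moments_unique k nu : k 0%N = 0 -> nu 0%N = 1 ->
  (forall n, agree n (ps_poly n nu) (1 + (ps_poly n k \Po ('X * ps_poly n nu)))) ->
  nu =1 cum_moments k.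
Proof.
move=> k0 nu0 nuE; apply: srec_unique; first exact: cum_moments_causal.
move=> [|n] //; have := nuE n.+2 n.+1 (ltnSn _).
by rewrite coefD coef1 coef_comp_ps_poly // coef_ps_poly ltnSn add0r.
Qed.

Lemma cumulantsK nu : nu 0%N = 1 -> cum_moments (cumulants nu) =1 nu.
Proof.
move=> nu0 i; symmetry; apply: cum_moments_unique => // n.
exact: agree_mom_cumulants.
Qed.

Lemma ps_inv1E a n : (0 < n)%N ->
  ps_inv1 a n = - \sum_(1 <= i < n.+1) a i * ps_inv1 a (n - i)%N.
Proof.
case: n => // n _; rewrite /ps_inv1 srec_fix // => -[|n'] b b' bb' //.
by congr (- _); apply: eq_big_nat => i /andP[lt0i _]; rewrite bb' //; move: lt0i; lia.
Qed.

Lemma agree_ps_inv1 n a : a 0%N = 1 -> agree n (ps_poly n a * ps_poly n (ps_inv1 a)) 1.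
Proof.
move=> a0 i lt_in; rewrite -(ps_mul_coef _ _ lt_in) coef1 /ps_mul big_ord_recl a0 mul1r.
case: i lt_in => [|i] _; first by rewrite big_ord0 addr0 /ps_inv1 srecE.
by rewrite ps_inv1E // big_add1 /= big_mkord addNr.
Qed.

Definition recip_subordination ms mt : ps K :=
  let D := fun n => (n == 0%N)%:R
    + \sum_(1 <= j < n.+1) cumulants ms j * ps_exp (ps_mulX mt) j n in
  ps_mul (ps_mulX mt) (ps_inv1 D).

Lemma recip_subordination0 ms mt : recip_subordination ms mt 0%N = 0.
Proof.
by rewrite /recip_subordination /ps_mul !big_ord1 /ps_mulX /ps_mul big_ord1 /ps_X !mul0r.
Qed.

Lemma agree_recip_subordination n ms mt :
  agree n (ps_poly n (recip_subordination ms mt)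
             * (1 + (ps_poly n (cumulants ms) \Po ('X * ps_poly n mt))))
          ('X * ps_poly n mt).
Proof.
set D := fun n => (n == 0%N)%:R
  + \sum_(1 <= j < n.+1) cumulants ms j * ps_exp (ps_mulX mt) j n.
have DE : agree n (ps_poly n D) (1 + (ps_poly n (cumulants ms) \Po ('X * ps_poly n mt))).
  by move=> i lt_in; rewrite coef_ps_poly lt_in coefD coef1 coef_comp_ps_poly ?cumulants0.
have D0 : D 0%N = 1 by rewrite /D big_geq ?addr0.
have fE : agree n (ps_poly n (recip_subordination ms mt))
                  ('X * ps_poly n mt * ps_poly n (ps_inv1 D)).
  apply: agree_trans (agree_ps_poly_mul _ _) _.
  by apply: agreeM => //; apply: agree_ps_poly_mulX.
apply: agree_trans (agreeM fE (agree_sym DE)) _.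
rewrite -mulrA -[X in agree _ _ X]mulr1; apply: agreeM => //.
by rewrite mulrC; apply: agree_ps_inv1.
Qed.
End Cumulants.

Section CumulantsMorphism.
Variables (K K' : comNzRingType) (phi : {rmorphism K -> K'}).

Lemma rmorph_ps_exp_mulX m j n :
  phi (ps_exp (ps_mulX m) j n) = ps_exp (ps_mulX (phi \o m)) j n.
Proof.
elim: j n => [|j IH] n; first by rewrite /= /ps_one rmorph_nat.
rewrite [LHS]rmorph_sum; apply: eq_bigr => i _; rewrite rmorphM IH; congr (_ * _).
by rewrite rmorph_sum; apply: eq_bigr => l _; rewrite rmorphM /ps_X rmorph_nat.
Qed.

Lemma rmorph_cumulants nu n : phi (cumulants nu n) = cumulants (phi \o nu) n.
Proof.
apply: rmorph_srec => -[|k] b; first exact: rmorph0.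
rewrite rmorphB rmorph_sum; congr (_ - _); apply: eq_bigr => j _.
by rewrite rmorphM rmorph_ps_exp_mulX.
Qed.

Lemma rmorph_cum_moments k n : phi (cum_moments k n) = cum_moments (phi \o k) n.
Proof.
apply: rmorph_srec => -[|n'] b; first exact: rmorph1.
by rewrite rmorph_sum; apply: eq_bigr => j _; rewrite rmorphM rmorph_ps_exp_mulX.
Qed.
End CumulantsMorphism.

Section FirstOrderPerturbation.
Variable F : comNzRingType.
Implicit Types p q : {poly {poly F}}.

(* On polynomials whose coefficients are polynomials in eps, [at0] sets eps = 0 and [d1]
   takes the derivative in eps at eps = 0. *)
Local Notation at0 := (map_poly (coefp 0)).
Local Notation d1 := (map_poly (coefp 1)).

Lemma coef_at0 p i : (at0 p)`_i = (p`_i)`_0.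
Proof. exact: coef_map. Qed.

Lemma coef_d1 p i : (d1 p)`_i = (p`_i)`_1.
Proof. exact: coef_map. Qed.

Lemma d1D p q : d1 (p + q) = d1 p + d1 q.
Proof. exact: raddfD. Qed.

Lemma at0D p q : at0 (p + q) = at0 p + at0 q.
Proof. exact: rmorphD. Qed.

Lemma at0M p q : at0 (p * q) = at0 p * at0 q.
Proof. exact: rmorphM. Qed.

Lemma at0_comp p q : at0 (p \Po q) = at0 p \Po at0 q.
Proof. exact: map_comp_poly. Qed.

Lemma at0C (c : {poly F}) : at0 c%:P = (c`_0)%:P.
Proof. exact: map_polyC. Qed.

Lemma at0X : at0 ('X : {poly {poly F}}) = 'X.
Proof. exact: map_polyX. Qed.

Lemma d1C (c : {poly F}) : d1 c%:P = (c`_1)%:P.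
Proof. exact: map_polyC. Qed.

Lemma d1X : d1 ('X : {poly {poly F}}) = 0.
Proof. by apply/polyP => i; rewrite coef_d1 coefX coef0; case: eqP; rewrite ?coefC. Qed.

Lemma d1M p q : d1 (p * q) = at0 p * d1 q + d1 p * at0 q.
Proof.
apply/polyP => i; rewrite coef_d1 coefD !coefM coef_sum -big_split /=.
apply: eq_bigr => j _; rewrite coefM big_ord_recr big_ord1 /=.
by rewrite !coef_at0 !coef_d1.
Qed.

Lemma d1_comp p q : d1 (p \Po q) = d1 p \Po at0 q + ((at0 p)^`() \Po at0 q) * d1 q.
Proof.
elim/poly_ind: p => [|p c IH].
  by rewrite comp_poly0 !map_poly0 deriv0 !comp_poly0 mul0r addr0.
rewrite comp_poly_MXaddC !d1D !d1M IH !at0D !at0M at0_comp d1X at0X !d1C !at0C derivMXaddC.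
by rewrite mulr0 add0r !comp_polyD !comp_polyM comp_polyX !comp_polyC; ring.
Qed.

Lemma at0_ps_poly n (a : ps {poly F}) : at0 (ps_poly n a) = ps_poly n (coefp 0 \o a).
Proof. by apply/polyP => i; rewrite coef_at0 !coef_ps_poly; case: ifP; rewrite ?coef0. Qed.

Lemma d1_ps_poly n (a : ps {poly F}) : d1 (ps_poly n a) = ps_poly n (coefp 1 \o a).
Proof. by apply/polyP => i; rewrite coef_d1 !coef_ps_poly; case: ifP; rewrite ?coef0. Qed.

Lemma agree_map_poly (f : {additive {poly F} -> F}) n p q :
  agree n p q -> agree n (map_poly f p) (map_poly f q).
Proof. by move=> pq i lt_in; rewrite !coef_map pq. Qed.

Lemma agree_d1_mom_cumulant n (m k : ps {poly F}) :
  let m0 := ps_poly n (coefp 0 \o m) in let m1 := ps_poly n (coefp 1 \o m) in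
  agree n (ps_poly n m) (1 + (ps_poly n k \Po ('X * ps_poly n m))) ->
  agree n m1 ((ps_poly n (coefp 1 \o k) \Po ('X * m0))
              + ((ps_poly n (coefp 0 \o k))^`() \Po ('X * m0)) * ('X * m1)).
Proof.
move=> m0 m1 /(agree_map_poly (coefp 1)).
rewrite d1D d1_comp d1C coef1 add0r !d1M !at0M d1X at0X !d1_ps_poly !at0_ps_poly.
by rewrite mul0r addr0.
Qed.
End FirstOrderPerturbation.

Section LinearResponse.
Variable K : comNzRingType.
Implicit Types S Hm Nu L d k ks kts f g Q Y : {poly K}.

Lemma comp_poly1 Y : 1 \Po Y = 1.
Proof. by rewrite -polyC1 comp_polyC. Qed.

Lemma agree_subordination n S k f Y : f`_0 = 0 ->
  agree n S (1 + (k \Po ('X * S))) -> agree n (f * (1 + (k \Po Y))) Y ->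
  agree n (('X * S) \Po f) Y.
Proof.
move=> f0 SE fY; apply: (agree_fixpoint_unique f0 _ (agree_sym fY)).
rewrite comp_polyM comp_polyX; apply: agree_le (leqnSn n) (agree_mul_coef0 f0 _).
have -> : 1 + (k \Po f * (S \Po f)) = (1 + (k \Po ('X * S))) \Po f.
  by rewrite comp_polyD comp_poly1 -comp_polyA comp_polyM comp_polyX.
exact: agree_compl.
Qed.

Lemma agree_deriv_fixpoint n g k Y :
  agree n.+1 Y (g * (1 + (k \Po Y))) ->
  agree n (Y^`() * (1 - g * (k^`() \Po Y))) (g^`() * (1 + (k \Po Y))).
Proof.
move=> /agree_deriv YE; rewrite mulrBr mulr1.
have -> : g^`() * (1 + (k \Po Y)) = (g * (1 + (k \Po Y)))^`() - Y^`() * (g * (k^`() \Po Y)).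
  by rewrite derivM derivD deriv_comp -polyC1 derivC add0r; ring.
by apply: agreeB.
Qed.

Lemma agree_linear_response n f d ks kts S Hm Nu L : f`_0 = 0 ->
  agree n (('X * S) \Po f) ('X * Hm) ->
  agree n Nu ((d \Po ('X * S)) + (ks^`() \Po ('X * S)) * ('X * Nu)) ->
  agree n L ((d \Po ('X * Hm)) + (kts^`() \Po ('X * Hm)) * ('X * L)) ->
  agree n (L * (1 - 'X * (kts^`() \Po ('X * Hm))))
          ((Nu \Po f) * (1 - f * (ks^`() \Po ('X * Hm)))).
Proof.
move=> f0 subord NuE LE; set H := 'X * Hm.
have NufE : agree n (Nu \Po f) ((d \Po H) + (ks^`() \Po H) * (f * (Nu \Po f))).
  apply: agree_trans (agree_compl f0 NuE) _.
  rewrite comp_polyD comp_polyM comp_polyM comp_polyX -!comp_polyA.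
  by apply: agreeD; [|apply: agreeM => //]; apply: agree_compr.
have dE : forall Y g, agree n Y ((d \Po H) + (g * Y)) -> agree n (Y * (1 - g)) (d \Po H).
  by move=> Y g YE; rewrite mulrBr mulr1 mulrC -[d \Po H](addrK (g * Y)); apply: agreeB.
have LE' : agree n L ((d \Po H) + ('X * (kts^`() \Po H)) * L) by rewrite -mulrA mulrCA.
have NufE' : agree n (Nu \Po f) ((d \Po H) + (f * (ks^`() \Po H)) * (Nu \Po f)).
  by rewrite -mulrA mulrCA.
exact: agree_trans (dE _ _ LE') (agree_sym (dE _ _ NufE')).
Qed.

(* S, Hm: moment series of mu_s and mu_{t+s}; ks, kts: their R-transforms;
   f = 1/F_{s,t+s}; Nu = w Q, L, d: first-order variations of the moments of mu_s, of the
   moments of mu_t [+] mu_s and of the R-transform of mu_s. *)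
Lemma agree_derivative_moments n S Hm Nu L d ks kts f Q :
  Hm`_0 = 1 -> f`_0 = 0 ->
  agree n.+1 S (1 + (ks \Po ('X * S))) ->
  agree n.+1 Hm (1 + (kts \Po ('X * Hm))) ->
  agree n.+1 (f * (1 + (ks \Po ('X * Hm)))) ('X * Hm) ->
  agree n.+1 Nu ((d \Po ('X * S)) + (ks^`() \Po ('X * S)) * ('X * Nu)) ->
  agree n.+1 L ((d \Po ('X * Hm)) + (kts^`() \Po ('X * Hm)) * ('X * L)) ->
  agree n.+1 Nu ('X * Q) ->
  agree n L ('X * f^`() * (Q \Po f)).
Proof.
move=> Hm0 f0 SE HmE fE NuE LE NuQ; set H := 'X * Hm.
set a := 1 - 'X * (kts^`() \Po H); set b := 1 - f * (ks^`() \Po H).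
have subord := agree_subordination f0 SE fE.
have response := agree_linear_response f0 subord NuE LE.
have HE : agree n (H^`() * a) Hm.
  have X0 : ('X : {poly K})`_0 = 0 by rewrite coefX.
  have := agree_deriv_fixpoint (agree_mul_coef0 X0 HmE).
  by rewrite derivX mul1r => /agree_trans/(_ (agree_sym HmE)); apply: agree_le.
have HfE : agree n (H^`() * b) (f^`() * (1 + (ks \Po H))).
  exact: agree_deriv_fixpoint (agree_sym fE).
have NufE : agree n.+1 (Nu \Po f) (f * (Q \Po f)).
  by rewrite -[f in f * _]comp_polyX -comp_polyM; apply: agree_compl.
have c0 : (a * H^`())`_0 = 1.
  by rewrite coef0M coefB coef1 coef0M coefX mul0r subr0 mul1r coef_deriv coefXM Hm0.
apply: (agree_mulr_cancel c0).
have lhsE : agree n (L * (a * H^`())) ((Q \Po f) * f^`() * H).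
  rewrite mulrA; apply: (@agree_trans _ _ _ ((Nu \Po f) * b * H^`())).
    by apply: agreeM => //; apply: agree_le (leqnSn n) response.
  apply: (@agree_trans _ _ _ (f * (Q \Po f) * b * H^`())).
    by apply: agreeM => //; apply: agreeM => //; apply: agree_le (leqnSn n) NufE.
  have -> : f * (Q \Po f) * b * H^`() = f * (Q \Po f) * (H^`() * b) by ring.
  apply: (@agree_trans _ _ _ (f * (Q \Po f) * (f^`() * (1 + (ks \Po H))))).
    exact: agreeM.
  have -> : f * (Q \Po f) * (f^`() * (1 + (ks \Po H)))
          = (Q \Po f) * f^`() * (f * (1 + (ks \Po H))) by ring.
  by apply: agreeM => //; apply: agree_le (leqnSn n) fE.
have rhsE : agree n ('X * f^`() * (Q \Po f) * (a * H^`())) ((Q \Po f) * f^`() * H).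
  have -> : 'X * f^`() * (Q \Po f) * (a * H^`()) = (Q \Po f) * f^`() * 'X * (H^`() * a).
    by ring.
  have -> : (Q \Po f) * f^`() * H = (Q \Po f) * f^`() * 'X * Hm by rewrite /H mulrA.
  exact: agreeM.
exact: agree_trans lhsE (agree_sym rhsE).
Qed.
End LinearResponse.

Lemma coef_mulX_deriv_comp (K : comNzRingType) (eta : ps K) (f : {poly K}) N i :
  f`_0 = 0 -> (i < N)%N ->
  ('X * (ps_poly N.+1 (fun k => if k is k'.+1 then eta k' else 0) \Po f)^`())`_i
   = i%:R * \sum_(j < i) eta j * (f ^+ j.+1)`_i.
Proof.
move=> f0 lt_iN; rewrite coefXM; case: i lt_iN => [|i] lt_iN; first by rewrite mul0r.
rewrite /= coef_deriv mulr_natl; congr (_ *+ _).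
rewrite (@coef_comp_poly_le _ _ _ N.+1) ?size_ps_poly // big_ord_recl coef_ps_poly /= mul0r add0r.
rewrite (big_ord_widen N (fun j => eta j * (f ^+ j.+1)`_i.+1)) ?(ltnW lt_iN) //.
rewrite [RHS]big_mkcond /=.
apply: eq_bigr => -[j /= lt_jN] _; rewrite coef_ps_poly /bump /= add1n ltnS lt_jN.
by case: ltnP => // le_ij; rewrite coef_expr_lt ?mulr0.
Qed.

Section PerturbedConvolution.
Variable F : comNzRingType.
Variables (ms mT nu eta kt : ps F).

(* For the moments ms of mu_s, a direction nu and the free cumulants kt of mu_t,
   [perturbed] is ms + eps nu and [perturbed_conv] the moments of mu_t [+] (ms + eps nu),
   as polynomials in eps. *)
Definition perturbed i : {poly F} := (ms i)%:P + (nu i)%:P * 'X.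
Definition perturbed_cumulants j : {poly F} := (kt j)%:P + cumulants perturbed j.
Definition perturbed_conv := cum_moments perturbed_cumulants.

Hypotheses (ms0 : ms 0%N = 1) (mT0 : mT 0%N = 1) (nu0 : nu 0%N = 0).
Hypothesis cumulants_mT : forall j, cumulants mT j = kt j + cumulants ms j.
Hypothesis nu_eta : forall j, nu j.+1 = j.+1%:R * eta j.

Lemma coef0_perturbed i : (perturbed i)`_0 = ms i.
Proof. by rewrite coefD coefC coefMX /= addr0. Qed.

Lemma coef1_perturbed i : (perturbed i)`_1 = nu i.
Proof. by rewrite coefD coefC coefMX /= coefC add0r. Qed.

Lemma coef0_cumulants_perturbed j : (cumulants perturbed j)`_0 = cumulants ms j.
Proof.
have -> : ms = coefp 0 \o perturbed by apply: boolp.funext => i /=; rewrite coef0_perturbed.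
exact: (rmorph_cumulants (coefp 0)).
Qed.

Lemma coef0_perturbed_cumulants j : (perturbed_cumulants j)`_0 = cumulants mT j.
Proof. by rewrite coefD coefC coef0_cumulants_perturbed cumulants_mT. Qed.

Lemma coef1_perturbed_cumulants j :
  (perturbed_cumulants j)`_1 = (cumulants perturbed j)`_1.
Proof. by rewrite coefD coefC add0r. Qed.

Lemma coef0_perturbed_conv i : (perturbed_conv i)`_0 = mT i.
Proof.
rewrite -[RHS](cumulantsK mT0); have -> : cumulants mT = coefp 0 \o perturbed_cumulants.
  by apply: boolp.funext => j /=; rewrite coef0_perturbed_cumulants.
exact: (rmorph_cum_moments (coefp 0)).
Qed.

Lemma agree_variation_perturbed N :
  agree N (ps_poly N nu)
    ((ps_poly N (coefp 1 \o cumulants perturbed) \Po ('X * ps_poly N ms))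
     + ((ps_poly N (cumulants ms))^`() \Po ('X * ps_poly N ms)) * ('X * ps_poly N nu)).
Proof.
have perturbed0 : perturbed 0%N = 1 by rewrite /perturbed ms0 nu0 mul0r addr0.
have := agree_d1_mom_cumulant (agree_mom_cumulants (n := N) perturbed0).
rewrite !(eq_ps_poly _ coef0_perturbed) (eq_ps_poly _ coef1_perturbed).
by rewrite (eq_ps_poly _ coef0_cumulants_perturbed); apply.
Qed.

Lemma agree_variation_perturbed_conv N :
  let L := ps_poly N (coefp 1 \o perturbed_conv) in
  agree N L
    ((ps_poly N (coefp 1 \o cumulants perturbed) \Po ('X * ps_poly N mT))
     + ((ps_poly N (cumulants mT))^`() \Po ('X * ps_poly N mT)) * ('X * L)).
Proof.
have kt0 : kt 0%N = 0 by have := cumulants_mT 0; rewrite !cumulants0 addr0.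
have pcum0 : perturbed_cumulants 0%N = 0 by rewrite /perturbed_cumulants kt0 cumulants0 addr0.
have := agree_d1_mom_cumulant (agree_cum_moments (n := N) pcum0).
rewrite !(eq_ps_poly _ coef0_perturbed_conv) (eq_ps_poly _ coef0_perturbed_cumulants).
by rewrite (eq_ps_poly _ coef1_perturbed_cumulants); apply.
Qed.

Lemma coef1_perturbed_conv i :
  (perturbed_conv i)`_1
    = i%:R * \sum_(j < i) eta j * ps_exp (recip_subordination ms mT) j.+1 i.
Proof.
set N := i.+2; set f := ps_poly N (recip_subordination ms mT).
set Q := ps_poly N (fun k => nu k.+1).
have mT0' : (ps_poly N mT)`_0 = 1 by rewrite coef_ps_poly.
have f0 : f`_0 = 0 by rewrite coef_ps_poly recip_subordination0.
have NuQ : agree N (ps_poly N nu) ('X * Q).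
  by move=> [|k] lt_kN; rewrite coefXM !coef_ps_poly lt_kN //= ltnW.
have := agree_derivative_moments mT0' f0 (agree_mom_cumulants (n := N) ms0)
  (agree_mom_cumulants (n := N) mT0) (@agree_recip_subordination _ N ms mT)
  (agree_variation_perturbed (N := N))
  (agree_variation_perturbed_conv (N := N)) NuQ (ltnSn i).
rewrite coef_ps_poly (leqW (ltnSn i)) /= => ->.
set P := ps_poly N.+1 (fun k => if k is k'.+1 then eta k' else 0).
have PQ : P^`() = Q.
  apply/polyP => k; rewrite coef_deriv !coef_ps_poly ltnS.
  by case: ifP => _; rewrite ?mul0rn // nu_eta mulr_natl.
have -> : 'X * f^`() * (Q \Po f) = 'X * (P \Po f)^`() by rewrite deriv_comp PQ; ring.
rewrite coef_mulX_deriv_comp ?(leqW (ltnSn i)) //; congr (_ * _); apply: eq_bigr => j _.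
by congr (_ * _); symmetry; apply: (ps_exp_coef _ j.+1 (leqW (ltnSn i))).
Qed.
End PerturbedConvolution.

Section Pairing.
Variable R : realType.
Local Notation C := R[i].
Implicit Types (nu eta : Mom R) (p q W : {poly C}).

Lemma size_deriv_le p : (size p^`() <= size p)%N.
Proof.
by apply/leq_sizeP => j le_pj; rewrite coef_deriv nth_default ?mul0rn // (leq_trans le_pj).
Qed.

Lemma pairingE nu p M : (size p <= M)%N -> pairing nu p = \sum_(i < M) p`_i * nu i.
Proof.
move=> le_pM; rewrite /pairing -(subnKC le_pM) big_split_ord /=.
by rewrite [X in _ = _ + X]big1 ?addr0 // => i _; rewrite nth_default ?mul0r ?leq_addr.
Qed.

Lemma pairingD nu p q : pairing nu (p + q) = pairing nu p + pairing nu q.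
Proof.
set M := maxn (size p) (size q).
have le_pqM : (size (p + q)%R <= M)%N := size_polyD p q.
rewrite (pairingE _ le_pqM) (pairingE _ (leq_maxl (size p) (size q))).
rewrite (pairingE _ (leq_maxr (size p) (size q))).
by rewrite -big_split; apply: eq_bigr => i _; rewrite coefD mulrDl.
Qed.

Lemma pairingZ nu c p : pairing nu (c *: p) = c * pairing nu p.
Proof.
rewrite (@pairingE _ _ (size p)) ?size_scale_leq // /pairing mulr_sumr.
by apply: eq_bigr => i _; rewrite coefZ mulrA.
Qed.

Lemma pairing_sum nu N (F : nat -> {poly C}) :
  pairing nu (\sum_(i < N) F i) = \sum_(i < N) pairing nu (F i).
Proof.
elim: N => [|N IH]; first by rewrite !big_ord0 /pairing size_poly0 big_ord0.
by rewrite !big_ord_recr /= pairingD IH.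
Qed.

Lemma pairingXn nu m : pairing nu 'X^m = nu m.
Proof.
rewrite (pairingE _ (leqnn _)) size_polyXn big_ord_recr /= coefXn eqxx mul1r.
by rewrite big1 ?add0r // => -[j /= lt_jm] _; rewrite coefXn ltn_eqF ?mul0r.
Qed.

Lemma pairing1 nu : pairing nu 1 = nu 0%N.
Proof. by rewrite -(expr0 'X) pairingXn. Qed.

Lemma pairing_deriv nu eta W : nu 0%N = 0 -> (forall j, nu j.+1 = j.+1%:R * eta j) ->
  pairing eta W^`() = pairing nu W.
Proof.
move=> nu0 nu_eta; rewrite [RHS](@pairingE _ _ (size W).+1) // big_ord_recl nu0 mulr0 add0r.
rewrite (@pairingE _ _ (size W)) ?size_deriv_le //.
apply: eq_bigr => a _; rewrite coef_deriv /= /bump /= add1n nu_eta.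
by rewrite -(mulr_natr (W`_a.+1)) mulrA.
Qed.

Lemma eq_on_basis (b : nat -> {poly C}) nu eta : is_basis_nat b ->
  (forall i, pairing nu (b i) = pairing eta (b i)) -> nu =1 eta.
Proof.
move=> [span _] nu_eta m; rewrite -pairingXn -[in RHS]pairingXn.
have [N [c ->]] := span 'X^m.
rewrite (pairing_sum nu N (fun i => c i *: b i)) (pairing_sum eta N (fun i => c i *: b i)).
by apply: eq_bigr => i _; rewrite !pairingZ nu_eta.
Qed.
End Pairing.

Section DegreeBasis.
Variable R : realType.
Local Notation C := R[i].
Variable b : nat -> {poly C}.
Hypothesis size_b : forall i, size (b i) = i.+1.

Lemma coef_b_diag i : (b i)`_i != 0.
Proof.
have : lead_coef (b i) != 0 by rewrite lead_coef_eq0 -size_poly_eq0 size_b.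
by rewrite lead_coefE size_b.
Qed.

Lemma span_of_size m (p : {poly C}) : (size p <= m)%N ->
  exists c : nat -> C, p = \sum_(i < m) c i *: b i.
Proof.
elim: m p => [|m IH] p le_pm.
  by exists (fun _ => 0); rewrite big_ord0; exact/size_poly_leq0P.
set cm := p`_m / (b m)`_m.
have [|c pE] := IH (p - cm *: b m).
  apply/leq_sizeP => j; rewrite coefB coefZ leq_eqVlt => /predU1P[<-|lt_mj].
    by rewrite /cm divfK ?subrr ?coef_b_diag.
  by rewrite !nth_default ?mulr0 ?subr0 ?size_b // (leq_trans le_pm).
exists (fun i => if i == m then cm else c i).
rewrite big_ord_recr /= eqxx -[p](subrK (cm *: b m)) pE.
by congr (_ + _); apply: eq_bigr => -[i /= lt_im] _; rewrite ltn_eqF.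
Qed.

Lemma free_of_size N (c : nat -> C) :
  \sum_(i < N) c i *: b i = 0 -> forall i, (i < N)%N -> c i = 0.
Proof.
elim: N => [|N IH] // sum0 i; rewrite big_ord_recr /= in sum0.
have cN : c N = 0.
  move/(congr1 (coefp N)): sum0; rewrite /= coefD coef_sum coefZ coef0 big1 ?add0r.
    by move/eqP; rewrite mulf_eq0 (negPf (coef_b_diag N)) orbF => /eqP.
  by move=> -[j /= lt_jN] _; rewrite coefZ nth_default ?mulr0 ?size_b.
rewrite cN scale0r addr0 in sum0; rewrite ltnS leq_eqVlt => /predU1P[-> //|].
exact: IH.
Qed.

Lemma is_basis_nat_of_size : is_basis_nat b.
Proof.
split; last exact: free_of_size.
by move=> p; have [c pE] := span_of_size (leqnn (size p)); exists (size p), c.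
Qed.
End DegreeBasis.

Lemma size_poly_deriv (R : realType) (p : {poly R[i]}) n :
  (0 < n)%N -> size p^`() = n -> size p = n.+1.
Proof.
move=> n_gt0 size_p'; have p'n : p^`()`_n.-1 != 0.
  have : lead_coef p^`() != 0 by rewrite lead_coef_eq0 -size_poly_eq0 size_p' -lt0n.
  by rewrite lead_coefE size_p'.
apply/eqP; rewrite eqn_leq; apply/andP; split.
  apply/leq_sizeP => j lt_nj; have j_gt0 : (0 < j)%N by rewrite (leq_trans _ lt_nj).
  have : p^`()`_j.-1 = 0 by rewrite nth_default // size_p' -ltnS prednK.
  by rewrite coef_deriv prednK // => /eqP; rewrite mulrn_eq0 eqn0Ngt j_gt0 => /eqP.
rewrite ltnNge; apply: contra p'n => /leq_sizeP/(_ n (leqnn n)) pn.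
by rewrite coef_deriv prednK // pn mul0rn.
Qed.

Section DifferenceQuotient.
Local Open Scope complex_scope.
Variable R : realType.
Local Notation C := R[i].

Lemma norm_complexE (z : C) : exists2 r : R, 0 <= r & `|z| = r%:C.
Proof.
by exists (Num.sqrt (complex.Re z ^+ 2 + complex.Im z ^+ 2)); rewrite ?sqrtr_ge0 ?normc_def.
Qed.

Lemma norm_horner_le (q : {poly C}) (x : C) : `|x| <= 1 ->
  `|q.[x]| <= \sum_(i < size q) `|q`_i|.
Proof.
move=> x_le1; rewrite horner_coef; apply: le_trans (ler_norm_sum _ _ _) _.
apply: ler_sum => i _; rewrite normrM normrX.
by apply: ler_piMr => //; apply: exprn_ile1.
Qed.

Lemma wlim0_difference_quotient (P : nat -> {poly C}) :
  wlim0 (fun eps n => ((P n).[eps] - (P n).[0]) / eps) (fun n => (P n)`_1).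
Proof.
move=> n e e_gt0 /=; set p := P n; set q := drop_poly 2 p.
have pE : p = (p`_0)%:P + (p`_1)%:P * 'X + q * 'X^2.
  apply/polyP => -[|[|i]]; rewrite !coefD coefC coefMX coefMXn coef_drop_poly coefC //=.
  - by rewrite !addr0.
  - by rewrite add0r addr0.
  - by rewrite !add0r subnK.
have [M M_ge0 sumM] : exists2 M : R, 0 <= M & \sum_(i < size q) `|q`_i| = M%:C.
  have [M M_ge0 sumM] := norm_complexE (\sum_(i < size q) `|q`_i|).
  by exists M; rewrite // -sumM ger0_norm // sumr_ge0.
exists (Num.min 1 (e / (M + 1))); split => [|eps eps_neq0].
  by rewrite lt_min ltr01 divr_gt0 // ltr_wpDl.
have [r r_ge0 epsE] := norm_complexE eps; rewrite epsE ltcR lt_min => /andP[r_lt1 r_small].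
have -> : (p.[eps] - p.[0]) / eps - p`_1 = eps * q.[eps].
  rewrite {1}pE horner_coef0 !hornerD hornerC !hornerM hornerC hornerX.
  by field.
have := norm_horner_le q (_ : `|eps| <= 1); rewrite epsE lecR sumM => /(_ (ltW r_lt1)).
have [s s_ge0 sE] := norm_complexE q.[eps]; rewrite normrM epsE sE lecR => s_le_M.
have : r * (M + 1) < e by rewrite -ltr_pdivlMr // ltr_wpDl.
have : r * s <= r * M by rewrite ler_wpM2l.
by rewrite -rmorphM ltcR; lra.
Qed.
End DifferenceQuotient.

Section FreeConvolution.
Local Open Scope complex_scope.
Variable R : realType.
Local Notation C := R[i].
Implicit Types (nu eta tau : Mom R).

Lemma free_cumE nu : free_cum nu = cumulants nu.
Proof. by []. Qed.

Lemma mom_of_cumE (k : nat -> C) : mom_of_cum k = cum_moments k.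
Proof. by []. Qed.

Lemma moments0 (P : probability R R) : moments P 0%N = 1.
Proof.
rewrite /moments (eq_integral (fun _ => 1%E)) => [|x _]; last by rewrite expr0.
rewrite integral_cst // mul1e.
exact: (congr1 (fun x => (fine x)%:C) (probability_setT P)).
Qed.

Lemma pairing_Kop ms mt eta (p : {poly C}) M : (size p <= M)%N ->
  pairing eta (Kop ms mt p)
  = \sum_(a < M) p`_a * \sum_(k < a.+1) ps_exp (Defs.invF ms mt) k.+1 a.+1 * eta k.
Proof.
move=> le_pM; rewrite /Kop (pairing_sum eta _ (fun a => p`_a *: Kop_mono ms mt a)).
rewrite -(subnKC le_pM) big_split_ord /= [X in _ = _ + X]big1 => [|a _]; last first.
  by rewrite nth_default ?mul0r ?leq_addr.
rewrite addr0; apply: eq_bigr => a _; rewrite pairingZ /Kop_mono.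
rewrite (pairing_sum eta _ (fun k => ps_exp (Defs.invF ms mt) k.+1 a.+1 *: 'X^k)).
by congr (_ * _); apply: eq_bigr => k _; rewrite pairingZ pairingXn.
Qed.

Lemma pairing_Kop_deriv ms mt eta (W : {poly C}) :
  pairing (fun i => i%:R * \sum_(j < i) eta j * ps_exp (recip_subordination ms mt) j.+1 i) W
  = pairing eta (Kop ms mt W^`()).
Proof.
rewrite (@pairingE _ _ _ (size W).+1) // big_ord_recl mul0r mulr0 add0r.
rewrite (@pairing_Kop _ _ _ _ (size W)) ?size_deriv_le //.
apply: eq_bigr => a _; rewrite coef_deriv /= /bump /= add1n mulr_natl mulrnAr mulrnAl.
by congr (_ * _ *+ _); apply: eq_bigr => k _; rewrite mulrC.
Qed.

Lemma Ct_perturbedE (mu : R -> probability R R) t tau nu eps m :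
  Ct mu t (fun k => tau k + eps * nu k) m
  = (perturbed_conv tau nu (cumulants (moments (mu t))) m).[eps].
Proof.
rewrite /perturbed_conv -horner_evalE rmorph_cum_moments /Ct /boxplus mom_of_cumE.
congr cum_moments; apply: boolp.funext => j.
rewrite /= /perturbed_cumulants horner_evalE hornerD hornerC -horner_evalE.
rewrite rmorph_cumulants free_cumE.
congr (_ + cumulants _ _); apply: boolp.funext => k.
by rewrite /= horner_evalE hornerD hornerC hornerM hornerC hornerX mulrC.
Qed.
End FreeConvolution.

Section FreeConvolutionSemigroup.
Local Open Scope complex_scope.
Variables (R : realType) (mu : R -> probability R R).
Hypothesis semigroup : free_conv_semigroup mu.

Lemma cumulants_semigroup u : 0 <= u ->
  forall j, cumulants (moments (mu u)) j = u%:C * cumulants (moments (mu 1)) j.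
Proof. by move=> u_ge0 [|j]; [rewrite !cumulants0 mulr0 | apply: semigroup.2]. Qed.

Lemma Ct_time0 tau : tau 0%N = 1 -> Ct mu 0 tau =1 tau.
Proof.
move=> tau0 m; rewrite /Ct /boxplus mom_of_cumE -[RHS](cumulantsK tau0); congr cum_moments.
by apply: boolp.funext => j; rewrite !free_cumE cumulants_semigroup // mul0r add0r.
Qed.

Lemma is_DCt_time0 tau nu : tau 0%N = 1 -> nu 0%N = 0 -> is_DCt mu 0 tau nu nu.
Proof.
move=> tau0 nu0 m e e_gt0; exists 1; split => // eps eps_neq0 _.
rewrite !Ct_time0 ?nu0 ?mulr0 ?addr0 //.
have -> : (tau m + eps * nu m - tau m) / eps = nu m by field.
by rewrite subrr normr0 ltcR.
Qed.

Lemma is_DCt_semigroup s t nu : 0 <= s -> 0 <= t -> nu 0%N = 0 ->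
  is_DCt mu t (moments (mu s)) nu
    (fun i => i%:R * \sum_(j < i) (nu j.+1 / j.+1%:R)
       * ps_exp (recip_subordination (moments (mu s)) (moments (mu (t + s)))) j.+1 i).
Proof.
move=> s_ge0 t_ge0 nu0 m e e_gt0.
set P := perturbed_conv (moments (mu s)) nu (cumulants (moments (mu t))).
have [d [d_gt0 dP]] := wlim0_difference_quotient P m e_gt0.
exists d; split => // eps eps_neq0 small.
have Ct0 : Ct mu t (moments (mu s)) m = (P m).[0].
  by rewrite -Ct_perturbedE; congr Ct; apply: boolp.funext => k; rewrite mul0r addr0.
have cumulants_ts j : cumulants (moments (mu (t + s))) j
    = cumulants (moments (mu t)) j + cumulants (moments (mu s)) j.
  rewrite (cumulants_semigroup (addr_ge0 t_ge0 s_ge0)) (cumulants_semigroup t_ge0).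
  by rewrite (cumulants_semigroup s_ge0) rmorphD mulrDl.
have nu_eta j : nu j.+1 = j.+1%:R * (nu j.+1 / j.+1%:R).
  by rewrite mulrC divfK // pnatr_eq0.
have := dP eps eps_neq0 small.
rewrite -Ct_perturbedE -Ct0.
by rewrite (coef1_perturbed_conv (moments0 _) (moments0 _) nu0 cumulants_ts nu_eta).
Qed.
End FreeConvolutionSemigroup.

Definition is_dual_family (R : realType) (V : nat -> R -> {poly R[i]})
    (Vstar : nat -> R -> Mom R) :=
  forall t : R, 0 <= t -> forall n, (0 < n)%N ->
    pairing (Vstar n t) 1 = 0 /\
    (forall k, (0 < k)%N -> pairing (Vstar n t) (V k t) = (n == k)%:R).

Section FluctuationPolynomials.
Variables (R : realType) (mu : R -> probability R R) (V : nat -> R -> {poly R[i]}).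
Hypothesis fluctuation : fluctuation_family mu V.

Lemma fluctuation_basis t : 0 <= t -> is_basis_nat (fun n => if n is 0 then 1 else V n t).
Proof.
move=> t_ge0; apply: is_basis_nat_of_size => -[|k]; first by rewrite size_poly1.
by apply: size_poly_deriv => //; have [_ ->] := @fluctuation k.+1 isT.
Qed.

Lemma dual_family_evolution Vstar n s t : is_dual_family V Vstar ->
  (0 < n)%N -> 0 <= s -> 0 < t ->
  Vstar n (t + s) =1 (fun i => i%:R * \sum_(j < i) (Vstar n s j.+1 / j.+1%:R)
       * ps_exp (recip_subordination (moments (mu s)) (moments (mu (t + s)))) j.+1 i).
Proof.
move=> dual n_gt0 s_ge0 t_gt0; have ts_ge0 : 0 <= t + s := addr_ge0 (ltW t_gt0) s_ge0.
have [Vs0 Vs_dual] := dual s s_ge0 n n_gt0; rewrite pairing1 in Vs0.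
have [Vts0 Vts_dual] := dual _ ts_ge0 n n_gt0; rewrite pairing1 in Vts0.
apply: (eq_on_basis (fluctuation_basis ts_ge0)) => -[|k]; first by rewrite !pairing1 Vts0 /= mul0r.
have [martingale _] := @fluctuation k.+1 isT.
rewrite Vts_dual // (pairing_Kop_deriv _ _ (fun j => Vstar n s j.+1 / j.+1%:R)).
have lt_s_ts : s < t + s by rewrite ltrDr.
rewrite (martingale s (t + s) s_ge0 lt_s_ts).
rewrite (pairing_deriv _ Vs0) ?Vs_dual // => j.
by rewrite mulrC divfK // pnatr_eq0.
Qed.
End FluctuationPolynomials.

Unset Implicit Arguments. Set Strict Implicit. Set Printing Implicit Defensive.

Theorem corollary4p6 (R : realType) (mu : R -> probability R R)
    (V : nat -> R -> {poly R[i]}) :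
  free_conv_semigroup mu ->
  fluctuation_family mu V ->
  (forall t : R, 0 <= t ->
     is_basis_nat (fun n => if n is 0 then 1 else V n t)) /\
  (forall Vstar : nat -> R -> Mom R,
     (forall t : R, 0 <= t -> forall n, (0 < n)%N ->
        pairing (Vstar n t) 1 = 0 /\
        (forall k, (0 < k)%N -> pairing (Vstar n t) (V k t) = (n == k)%:R)) ->
     forall n, (0 < n)%N -> forall s t : R, 0 <= s -> 0 <= t ->
       is_DCt mu t (moments (mu s)) (Vstar n s) (Vstar n (t + s))).
Proof.
move=> semigroup fluctuation; split=> [t|Vstar dual n n_gt0 s t s_ge0 t_ge0].
  exact: (fluctuation_basis fluctuation).
have Vs0 : Vstar n s 0%N = 0 by have [+ _] := dual s s_ge0 n n_gt0; rewrite pairing1.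
have [->|t_neq0] := eqVneq t 0.
  by rewrite add0r; apply: is_DCt_time0 => //; apply: moments0.
have t_gt0 : 0 < t by rewrite lt_def t_neq0.
rewrite (boolp.funext (dual_family_evolution fluctuation dual n_gt0 s_ge0 t_gt0)).
exact: is_DCt_semigroup.
Qed.
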